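(* Fix a constant $0<\alpha<1$. There exist constants $c>0$ and $n_0$ (depending only on $\alpha$) such that for all $n\ge n_0$ and all $D$ with $1\le D\le \alpha n$: if a deterministic algorithm together with advice assignments accomplishes (even anonymous) topology recognition within time $D$ on every graph of size $n$ and diameter $D$, then the size of advice is at least $c\,n\log n$. That is, the size of advice needed is in $\Omega(n\log n)$.
   Context: Graphs are finite, simple, undirected, connected, with no node labels; at each node of degree $d$ the incident edges carry distinct port numbers $0,\dots,d-1$ (no coherence between endpoints). Isomorphism is a bijection of nodes preserving edges and port numbers at both endpoints. Size = number of nodes; $\log$ is base 2. Communication model (LOCAL): synchronous rounds, all nodes start simultaneously; in each round every node may send arbitrary messages to all neighbours, receives their messages (knowing the arrival port), and performs arbitrary local computation. Initially a node knows only its degree and its advice. Advice: an oracle knowing the graph assigns each node a binary string; the size of advice is the maximum string length. All nodes run the same deterministic algorithm. Anonymous topology recognition: every node outputs a port-labeled graph isomorphic to $G$. Time is the number of rounds until all nodes have output. *)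

From mathcomp Require Import all_boot.
From Stdlib Require Import Reals.

Set Implicit Arguments.
Unset Strict Implicit.
Unset Printing Implicit Defensive.

(* "dist(u,v) <= k" for a graph on 'I_n given by degrees and port maps:
   nb u p is the neighbour of u reached through port p (p < deg u). *)
Fixpoint reach (n : nat) (deg : 'I_n -> nat) (nb : 'I_n -> nat -> 'I_n)
  (k : nat) (u v : 'I_n) : Prop :=
  match k with
  | 0 => u = v
  | k'.+1 => reach deg nb k' u v \/ exists2 p, p < deg u & reach deg nb k' (nb u p) v
  end.

(* At node v the incident edges carry ports 0..deg v - 1; port p of v leads
   to node nb v p, where that edge has port bp v p. Values of nb/bp at
   p >= deg v are irrelevant (never used). *)
Record PGraph (n : nat) : Type := PG {
  deg : 'I_n -> nat;
  nb  : 'I_n -> nat -> 'I_n;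
  bp  : 'I_n -> nat -> nat;
  bp_lt : forall v p, p < deg v -> bp v p < deg (nb v p);
  nb_back : forall v p, p < deg v -> nb (nb v p) (bp v p) = v;
  bp_back : forall v p, p < deg v -> bp (nb v p) (bp v p) = p;
  nb_noloop : forall v p, p < deg v -> nb v p <> v;
  nb_inj : forall v p q, p < deg v -> q < deg v -> nb v p = nb v q -> p = q;
  pg_connected : exists k, forall u v, reach deg nb k u v
}.

Definition diameter (n : nat) (G : PGraph n) (D : nat) : Prop :=
  (forall u v, reach (deg G) (nb G) D u v) /\
  (exists u v, ~ reach (deg G) (nb G) D.-1 u v).

Definition pg_iso (n m : nat) (G : PGraph n) (H : PGraph m) : Prop :=
  exists f : 'I_n -> 'I_m, bijective f /\
    forall v, deg H (f v) = deg G v /\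
      forall p, p < deg G v ->
        nb H (f v) p = f (nb G v p) /\ bp H (f v) p = bp G v p.

(* A deterministic LOCAL algorithm (same for all nodes), with arbitrary state
   type S and message type M.
   - a_init d a : initial state of a node of degree d with advice a;
   - a_send s p : message sent on port p by a node in state s;
   - a_update s ms : new state after receiving ms (ms`_p = message arriving
     through port p, size ms = degree) -- arbitrary local computation;
   - a_out s : Some H if the node outputs the graph H in state s. *)
Record Alg (S M : Type) : Type := MkAlg {
  a_init : nat -> seq bool -> S;
  a_send : S -> nat -> M;
  a_update : S -> seq M -> S;
  a_out : S -> option {m : nat & PGraph m}
}.

Fixpoint run (S M : Type) (A : Alg S M) (n : nat) (G : PGraph n)
  (adv : 'I_n -> seq bool) (t : nat) : 'I_n -> S :=
  match t with
  | 0 => fun v => a_init A (deg G v) (adv v)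
  | t'.+1 => fun v =>
      let s := run A G adv t' in
      a_update A (s v) [seq a_send A (s (nb G v p)) (bp G v p) | p <- iota 0 (deg G v)]
  end.

Definition recognizes_within (S M : Type) (A : Alg S M) (n : nat) (G : PGraph n)
  (adv : 'I_n -> seq bool) (T : nat) : Prop :=
  forall v, exists t, t <= T /\
    exists H, a_out A (run A G adv t v) = Some H /\ pg_iso G (projT2 H) /\
      (forall t', t' < t -> a_out A (run A G adv t' v) = None).

Definition advice_size (n : nat) (adv : 'I_n -> seq bool) : nat :=
  \max_(v < n) size (adv v).

Definition log2 (x : R) : R := (ln x / ln 2)%R.

(* Let K = n - D.  Nodes 0..K-1 together with a hub K form a clique, and a path
   K, K+1, ..., n-1 hangs from the hub; numbering the ports of the K non-hub clique
   nodes by arbitrary permutations gives K!^K graphs of size n and diameter D.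
   Within D rounds the far end n-1 of the path learns nothing but the advice and
   the K port numbers at which the clique sees the hub, yet its output graph,
   together with an isomorphism onto it, determines the whole numbering.  Hence
   K!^K <= (2^(X+1)+1)^n (K+1)^K (n+1)^n for advice size X, and K >= (1 - alpha) n
   turns this into X = Omega(n log n). *)

From mathcomp Require Import all_boot fingroup perm zify.
From Stdlib Require Import Reals Lra ClassicalEpsilon.
(* Reals rebinds [^] on nat to [Nat.pow]. *)
Import ssrnat.

Set Implicit Arguments.
Unset Strict Implicit.
Unset Printing Implicit Defensive.

Section Reach.
Variables (n : nat) (d : 'I_n -> nat) (nb : 'I_n -> nat -> 'I_n).

Lemma reach_refl k u : reach d nb k u u.
Proof. by elim: k => [|k IH] //=; left. Qed.

Lemma reach_le k k' u v : k <= k' -> reach d nb k u v -> reach d nb k' u v.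
Proof.
move=> /subnKC <-; elim: (k' - k) => [|m IH]; first by rewrite addn0.
by move=> ?; rewrite addnS; left; apply: IH.
Qed.

Lemma reach_trans a b u w v :
  reach d nb a u w -> reach d nb b w v -> reach d nb (a + b) u v.
Proof.
elim: a u => [|a IH] u /=; first by move=> ->.
by move=> [h | [p hp h]] h2; [left | right; exists p] => //; apply: IH h h2.
Qed.

Lemma reach_edge u p : p < d u -> reach d nb 1 u (nb u p).
Proof. by move=> hp; right; exists p. Qed.

Lemma reach_potential (h : 'I_n -> nat) :
  (forall u p, p < d u -> h (nb u p) <= (h u).+1) ->
  forall t u v, reach d nb t u v -> h v <= h u + t.
Proof.
move=> hh; elim=> [|t IH] u v /=; first by move=> ->; rewrite addn0.
by move=> [H | [p hp H]]; have := IH _ _ H; [| have := hh _ _ hp]; lia.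
Qed.

End Reach.

(* Binary numeral with a leading 1, so that strings of different lengths get different codes. *)
Fixpoint bincode (w : seq bool) : nat := if w is b :: w' then b + (bincode w').*2 else 1.

Lemma bincode_gt0 w : 0 < bincode w.
Proof. by elim: w => [|b w IH] //=; lia. Qed.

Lemma bincode_lt w : bincode w < 2 ^ (size w).+1.
Proof. by elim: w => [|b w IH] //=; rewrite expnS; lia. Qed.

Lemma bincode_inj : injective bincode.
Proof.
elim=> [|b w IH] [|b' w'] /=; first by [].
- by have := bincode_gt0 w'; lia.
- by have := bincode_gt0 w; lia.
move=> e; have bE : b = b' by case: b b' e => [] [] /=; lia.
by rewrite bE (IH w') //; lia.
Qed.

Lemma inord_inj m x y : x <= m -> y <= m -> inord x = inord y :> 'I_m.+1 -> x = y.
Proof. by move=> xm ym /(congr1 (@nat_of_ord _)); rewrite !inordK. Qed.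

Lemma ohead_pmap_iota (X : Type) (f : nat -> option X) t m x :
  t < m -> f t = Some x -> (forall i, i < t -> f i = None) ->
  ohead (pmap f (iota 0 m)) = Some x.
Proof.
move=> tm ft before; have -> : m = t + (m - t).-1.+1 by lia.
rewrite iotaD pmap_cat add0n /= ft.
suff -> : pmap f (iota 0 t) = [::] by [].
apply: size0nil; rewrite size_pmap -[RHS](count_pred0 (iota 0 t)).
by apply: eq_in_count => i; rewrite mem_iota add0n => /andP [_ /before ->].
Qed.

Definition pg_iso_map (n m : nat) (G : PGraph n) (H : PGraph m) (f : 'I_n -> 'I_m) :=
  bijective f /\ forall v, deg H (f v) = deg G v /\
    forall p, p < deg G v -> nb H (f v) p = f (nb G v p) /\ bp H (f v) p = bp G v p.

Lemma pg_iso_map_nb n m (G1 G2 : PGraph n) (H : PGraph m) (f1 f2 : 'I_n -> 'I_m) v p :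
  f1 =1 f2 -> pg_iso_map G1 H f1 -> pg_iso_map G2 H f2 -> p < deg G1 v ->
  nb G1 v p = nb G2 v p.
Proof.
move=> f12 [[g f1K _] iso1] [_ iso2] hp.
have [d1 /(_ p hp) [nb1 _]] := iso1 v; have [d2 /(_ p) [|nb2 _]] := iso2 v.
  by rewrite -d2 -f12 d1.
by rewrite -(f1K (nb G1 v p)) -nb1 f12 nb2 -f12 f1K.
Qed.

(* Port p of a clique node u < K leads to the (pi u p)-th element of {0..K} minus u;
   at the hub K port p < K leads to p and port K to K+1; on the path port 0 points
   back and port 1 forward. *)
Section Lollipop.
Variables (n K : nat) (pi pi_inv : nat -> nat -> nat).

Definition lol_deg u :=
  if u < K then K else if u == K then (K.+1 < n) + K else (u.+1 < n) + 1.

Definition lol_nb u p :=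
  if u < K then bump u (pi u p)
  else if u == K then (if p < K then p else K.+1)
  else if p == 0 then u.-1 else u.+1.

Definition lol_bp u p :=
  if u < K then
    let w := bump u (pi u p) in if w == K then u else pi_inv w (unbump w u)
  else if u == K then (if p < K then pi_inv p K.-1 else 0)
  else if p == 0 then (if u.-1 == K then K else 1) else 0.

Lemma lol_clique u p : u < K ->
  [/\ lol_deg u = K, lol_nb u p = bump u (pi u p) &
      lol_bp u p = let w := bump u (pi u p) in
                   if w == K then u else pi_inv w (unbump w u)].
Proof. by rewrite /lol_deg /lol_nb /lol_bp => ->. Qed.

Lemma lol_hub p :
  [/\ lol_deg K = (K.+1 < n) + K, lol_nb K p = (if p < K then p else K.+1) &
      lol_bp K p = if p < K then pi_inv p K.-1 else 0].
Proof. by rewrite /lol_deg /lol_nb /lol_bp ltnn eqxx. Qed.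

Lemma lol_path u p : K < u ->
  [/\ lol_deg u = (u.+1 < n) + 1, lol_nb u p = (if p == 0 then u.-1 else u.+1) &
      lol_bp u p = if p == 0 then (if u.-1 == K then K else 1) else 0].
Proof.
move=> Ku; rewrite /lol_deg /lol_nb /lol_bp.
by have [-> ->] : (u < K) = false /\ (u == K) = false by split; lia.
Qed.

Lemma lol_nb_neq u p : p < lol_deg u -> lol_nb u p != u.
Proof.
rewrite /lol_deg /lol_nb; case: ifP => uK; first by rewrite eq_sym neq_bump.
by do 2 case: ifP; lia.
Qed.

Hypothesis piK : forall u p, u < K -> p < K -> pi_inv u (pi u p) = p.

Lemma lol_nb_inj u p q : p < lol_deg u -> q < lol_deg u ->
  lol_nb u p = lol_nb u q -> p = q.
Proof.
case: (ltngtP u K) => [uK | Ku | ->].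
- have [-> -> _] := lol_clique p uK; have [_ -> _] := lol_clique q uK.
  by move=> pK qK /(can_inj (bumpK u)) /(congr1 (pi_inv u)); rewrite !piK.
- have [-> -> _] := lol_path p Ku; have [_ -> _] := lol_path q Ku.
  by do 2 case: ifP; lia.
- have [-> -> _] := lol_hub p; have [_ -> _] := lol_hub q.
  by do 2 case: ifP; lia.
Qed.

Hypothesis pi_lt : forall u p, u < K -> p < K -> pi u p < K.
Hypothesis pi_inv_lt : forall u q, u < K -> q < K -> pi_inv u q < K.
Hypothesis pi_invK : forall u q, u < K -> q < K -> pi u (pi_inv u q) = q.
Hypothesis K_lt_n : K < n.

Lemma lol_edge_clique u p : u < K -> p < K ->
  let v := lol_nb u p in let q := lol_bp u p in
  [/\ v <= K, q < lol_deg v, lol_nb v q = u & lol_bp v q = p].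
Proof.
move=> uK pK /=; have [_ -> ->] := lol_clique p uK.
have piu_lt := pi_lt uK pK; set w := bump u (pi u p).
have wK : w <= K by rewrite /w /bump; lia.
have wu : w != u by rewrite eq_sym neq_bump.
case: (eqVneq w K) => [wE | /negPf wnK].
  have piE : pi u p = K.-1 by move: wE; rewrite /w /bump; lia.
  rewrite wE /= eqxx; have [-> -> ->] := lol_hub u.
  by rewrite uK -piE piK //; split => //; lia.
have wlt : w < K by rewrite ltn_neqAle wnK.
have ult : unbump w u < K by rewrite /unbump; lia.
rewrite /= wnK; have [-> -> ->] := lol_clique (pi_inv w (unbump w u)) wlt.
rewrite pi_invK // unbumpK ?inE 1?eq_sym //= (ltn_eqF uK) /w bumpK piK //.
by split => //; apply: pi_inv_lt.
Qed.

Lemma lol_edge_hub p : p < lol_deg K ->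
  let v := lol_nb K p in let q := lol_bp K p in
  [/\ v < n, q < lol_deg v, lol_nb v q = K & lol_bp v q = p].
Proof.
have [-> -> ->] := lol_hub p => /= hp; case: ifP => pK.
  have qK : pi_inv p K.-1 < K by apply: pi_inv_lt; lia.
  have [-> -> ->] := lol_clique (pi_inv p K.-1) pK.
  have -> : bump p (pi p (pi_inv p K.-1)) = K by rewrite pi_invK /bump; lia.
  by rewrite /= eqxx; split => //; lia.
have [hn ->] : K.+1 < n /\ p = K by lia.
have [-> -> ->] := lol_path 0 (ltnSn K).
by rewrite eqxx hn /= eqxx; split => //; lia.
Qed.

Lemma lol_edge_path u p : K < u < n -> p < lol_deg u ->
  let v := lol_nb u p in let q := lol_bp u p in
  [/\ v < n, q < lol_deg v, lol_nb v q = u & lol_bp v q = p].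
Proof.
case/andP=> Ku un; have [-> -> ->] := lol_path p Ku => /= hp.
case: (eqVneq p 0) => [-> | p0] /=.
  case: (eqVneq u.-1 K) => [uK | uK].
    rewrite uK; have [-> -> ->] := lol_hub K; rewrite ltnn.
    by split; lia.
  have Ku1 : K < u.-1 by lia.
  have [-> -> ->] := lol_path 1 Ku1.
  by rewrite /=; split; lia.
have un1 : u.+1 < n by lia.
have [-> -> ->] := lol_path 0 (ltn_trans Ku (ltnSn u)).
rewrite /= (_ : (u == K) = false); last by lia.
by split; lia.
Qed.

Lemma lol_edge u p : u < n -> p < lol_deg u ->
  let v := lol_nb u p in let q := lol_bp u p in
  [/\ v < n, q < lol_deg v, lol_nb v q = u & lol_bp v q = p].
Proof.
move=> un; case: (ltngtP u K) => [uK | Ku | ->]; last exact: lol_edge_hub.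
  have [-> _ _] := lol_clique 0 uK => pK.
  by have [vK ? ? ?] := lol_edge_clique uK pK; split => //; lia.
by apply: lol_edge_path; rewrite Ku.
Qed.

End Lollipop.

Section PermFamily.
Variables (K : nat) (s : {ffun 'I_K -> {perm 'I_K}}).

Definition fam_nat (u p : nat) : nat :=
  if insub u : option 'I_K is Some u' then
    if insub p : option 'I_K is Some p' then val (s u' p') else 0
  else 0.

Definition fam_inv_nat (u q : nat) : nat :=
  if insub u : option 'I_K is Some u' then
    if insub q : option 'I_K is Some q' then val ((s u')^-1%g q') else 0
  else 0.

Lemma fam_natE u p (uK : u < K) (pK : p < K) :
  fam_nat u p = s (Ordinal uK) (Ordinal pK).
Proof. by rewrite /fam_nat !insubT. Qed.

Lemma fam_inv_natE u q (uK : u < K) (qK : q < K) :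
  fam_inv_nat u q = (s (Ordinal uK))^-1%g (Ordinal qK).
Proof. by rewrite /fam_inv_nat !insubT. Qed.

Lemma fam_nat_lt u p : u < K -> p < K -> fam_nat u p < K.
Proof. by move=> uK pK; rewrite (fam_natE uK pK). Qed.

Lemma fam_inv_nat_lt u q : u < K -> q < K -> fam_inv_nat u q < K.
Proof. by move=> uK qK; rewrite (fam_inv_natE uK qK). Qed.

Lemma fam_natK u p : u < K -> p < K -> fam_inv_nat u (fam_nat u p) = p.
Proof.
move=> uK pK; rewrite (fam_inv_natE uK (fam_nat_lt uK pK)).
suff -> : Ordinal (fam_nat_lt uK pK) = s (Ordinal uK) (Ordinal pK) by rewrite permK.
by apply: val_inj; rewrite /= fam_natE.
Qed.

Lemma fam_inv_natK u q : u < K -> q < K -> fam_nat u (fam_inv_nat u q) = q.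
Proof.
move=> uK qK; rewrite (fam_natE uK (fam_inv_nat_lt uK qK)).
suff -> : Ordinal (fam_inv_nat_lt uK qK) = (s (Ordinal uK))^-1%g (Ordinal qK).
  by rewrite permKV.
by apply: val_inj; rewrite /= fam_inv_natE.
Qed.

End PermFamily.

Section LollipopGraph.
Variables (n K : nat) (s : {ffun 'I_K -> {perm 'I_K}}).
Hypothesis K_lt_n : K < n.

Local Notation pi := (fam_nat s).
Local Notation pi_inv := (fam_inv_nat s).

Let lol_edge_fam := lol_edge (@fam_natK K s) (@fam_nat_lt K s)
  (@fam_inv_nat_lt K s) (@fam_inv_natK K s) K_lt_n.

Definition node (a : nat) : 'I_n := insubd (Ordinal K_lt_n) a.

Lemma val_node a : a < n -> val (node a) = a.
Proof. by move=> an; rewrite /node insubdK. Qed.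

Lemma node_val (v : 'I_n) : node v = v.
Proof. by apply: val_inj; rewrite val_node. Qed.

Definition lol_gdeg (v : 'I_n) := lol_deg n K v.
Definition lol_gnb (v : 'I_n) p := node (lol_nb K pi v p).
Definition lol_gbp (v : 'I_n) p := lol_bp K pi pi_inv v p.

Lemma val_lol_gnb v p : p < lol_gdeg v -> val (lol_gnb v p) = lol_nb K pi v p.
Proof. by move=> hp; rewrite val_node //; case: (lol_edge_fam (ltn_ord v) hp). Qed.

Lemma lol_gbp_lt v p : p < lol_gdeg v -> lol_gbp v p < lol_gdeg (lol_gnb v p).
Proof. by move=> hp; rewrite /lol_gdeg val_lol_gnb //; case: (lol_edge_fam (ltn_ord v) hp). Qed.

Lemma lol_gnb_back v p : p < lol_gdeg v -> lol_gnb (lol_gnb v p) (lol_gbp v p) = v.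
Proof.
move=> hp; apply: val_inj; rewrite val_lol_gnb; last exact: lol_gbp_lt.
by rewrite val_lol_gnb //; case: (lol_edge_fam (ltn_ord v) hp).
Qed.

Lemma lol_gbp_back v p : p < lol_gdeg v -> lol_gbp (lol_gnb v p) (lol_gbp v p) = p.
Proof. by move=> hp; rewrite /lol_gbp val_lol_gnb //; case: (lol_edge_fam (ltn_ord v) hp). Qed.

Lemma lol_gnb_neq v p : p < lol_gdeg v -> lol_gnb v p <> v.
Proof. by move=> hp e; have := lol_nb_neq pi hp; rewrite -val_lol_gnb // e eqxx. Qed.

Lemma lol_gnb_inj v p q : p < lol_gdeg v -> q < lol_gdeg v ->
  lol_gnb v p = lol_gnb v q -> p = q.
Proof.
move=> hp hq /(congr1 val); rewrite !val_lol_gnb //.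
exact: (lol_nb_inj (@fam_natK K s) (n := n) hp hq).
Qed.

Local Notation lreach := (reach lol_gdeg lol_gnb).

Lemma lol_reach_edge a p b : a < n -> p < lol_deg n K a -> lol_nb K pi a p = b ->
  lreach 1 (node a) (node b).
Proof.
move=> an hp <-; have hp' : p < lol_gdeg (node a) by rewrite /lol_gdeg val_node.
suff <- : lol_gnb (node a) p = node (lol_nb K pi a p) by apply: reach_edge.
by rewrite /lol_gnb val_node.
Qed.

Lemma clique_reach a b : a <= K -> b <= K -> lreach 1 (node a) (node b).
Proof.
move=> aK bK; case: (eqVneq a b) => [-> | ab]; first by left; apply: reach_refl.
have [aE | aK'] : a = K \/ a < K by lia.
  have bK' : b < K by lia.
  have [hd hnb _] := lol_hub n K pi pi_inv b.
  by rewrite aE; apply: (@lol_reach_edge K b); rewrite ?hd ?hnb ?bK'; lia.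
have hq : unbump a b < K by rewrite /unbump; lia.
have [hd hnb _] := lol_clique n pi pi_inv (fam_inv_nat s a (unbump a b)) aK'.
apply: (@lol_reach_edge a (fam_inv_nat s a (unbump a b))); first by lia.
  by rewrite hd; apply: fam_inv_nat_lt.
by rewrite hnb fam_inv_natK // unbumpK // inE eq_sym.
Qed.

Lemma path_step a : K <= a -> a.+1 < n ->
  lreach 1 (node a) (node a.+1) /\ lreach 1 (node a.+1) (node a).
Proof.
move=> Ka an; split.
  case: (eqVneq a K) => [-> | aK].
    have [hd hnb _] := lol_hub n K pi pi_inv K.
    by apply: (@lol_reach_edge K K); rewrite ?hd ?hnb ?ltnn; lia.
  have Ka' : K < a by lia.
  have [hd hnb _] := lol_path n pi pi_inv 1 Ka'.
  by apply: (@lol_reach_edge a 1); rewrite ?hd ?hnb /=; lia.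
have [hd hnb _] := lol_path n pi pi_inv 0 (leq_ltn_trans Ka (ltnSn a)).
by apply: (@lol_reach_edge a.+1 0); rewrite ?hd ?hnb /=; lia.
Qed.

Lemma path_reach a m : K <= a -> a + m < n ->
  lreach m (node a) (node (a + m)) /\ lreach m (node (a + m)) (node a).
Proof.
move=> Ka; elim: m => [|m IH] am; first by rewrite addn0; split; apply: reach_refl.
have [Kam amn] : K <= a + m /\ (a + m).+1 < n by lia.
have [up down] := path_step Kam amn.
have [IHu IHd] := IH (ltnW amn); rewrite addnS.
by split; [rewrite -[m.+1]addn1; apply: reach_trans IHu up
          | rewrite -[m.+1]add1n; apply: reach_trans down IHd].
Qed.

Lemma lol_reach_all (u v : 'I_n) : lreach (n - K) u v.
Proof.
rewrite -(node_val u) -(node_val v).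
move: (val u) (val v) (ltn_ord u) (ltn_ord v) => a b an bn.
have hub_path c : K <= c -> c < n ->
    lreach (c - K) (node K) (node c) /\ lreach (c - K) (node c) (node K).
  by move=> Kc cn; have := @path_reach K (c - K) (leqnn K); rewrite subnKC //; apply.
case: (leqP a K) => aK; case: (leqP b K) => bK.
- by apply: reach_le (clique_reach aK bK); lia.
- apply: (@reach_le _ _ _ (1 + (b - K))); first by lia.
  exact: reach_trans (clique_reach aK (leqnn K)) (hub_path b (ltnW bK) bn).1.
- apply: (@reach_le _ _ _ (a - K + 1)); first by lia.
  exact: reach_trans (hub_path a (ltnW aK) an).2 (clique_reach (leqnn K) bK).
case: (leqP a b) => ab.
  have := @path_reach a (b - a) (ltnW aK); rewrite subnKC // => /(_ bn) [+ _].
  by apply: reach_le; lia.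
have := @path_reach b (a - b) (ltnW bK); rewrite subnKC; last exact: ltnW.
by move=> /(_ an) [_]; apply: reach_le; lia.
Qed.

Definition lollipop : PGraph n :=
  PG lol_gbp_lt lol_gnb_back lol_gbp_back lol_gnb_neq lol_gnb_inj
    (ex_intro _ (n - K) lol_reach_all).

Hypothesis K_gt0 : 0 < K.

(* The potential u - (K - 1), truncated, is 0 on the clique and n - K at n - 1. *)
Lemma lol_not_reach : ~ lreach (n - K).-1 (node 0) (node n.-1).
Proof.
have step u p : p < lol_gdeg u -> val (lol_gnb u p) - K.-1 <= (val u - K.-1).+1.
  move=> hp; rewrite val_lol_gnb //; case: u hp => a an; rewrite /lol_gdeg /=.
  case: (ltngtP a K) => [aK | Ka | ->].
  - have [-> -> _] := lol_clique n pi pi_inv p aK => pK.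
    by have := fam_nat_lt s aK pK; rewrite /bump; lia.
  - by have [-> -> _] := lol_path n pi pi_inv p Ka; case: ifP; lia.
  - by have [-> -> _] := lol_hub n K pi pi_inv p; case: ifP; lia.
move=> /(reach_potential (h := fun u => val u - K.-1) step).
by rewrite !val_node; lia.
Qed.

Lemma lollipop_diameter : diameter lollipop (n - K).
Proof.
by split; [exact: lol_reach_all | exists (node 0), (node n.-1); exact: lol_not_reach].
Qed.

End LollipopGraph.

Lemma lollipop_inj n K (K_lt_n : K < n) (s1 s2 : {ffun 'I_K -> {perm 'I_K}}) :
  (forall v p, p < deg (lollipop s1 K_lt_n) v ->
     nb (lollipop s1 K_lt_n) v p = nb (lollipop s2 K_lt_n) v p) ->
  s1 = s2.
Proof.
move=> eq_nb; apply/ffunP => u; apply/permP => p.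
have un : (u : nat) < n := ltn_trans (ltn_ord u) K_lt_n.
have hp : (p : nat) < lol_gdeg K (node K_lt_n u).
  have [hd _ _] := lol_clique n (fam_nat s1) (fam_inv_nat s1) p (ltn_ord u).
  by rewrite /lol_gdeg val_node // hd.
move: (eq_nb _ _ hp) => /= /(congr1 val).
rewrite !val_lol_gnb // val_node //.
have [_ -> _] := lol_clique n (fam_nat s1) (fam_inv_nat s1) p (ltn_ord u).
have [_ -> _] := lol_clique n (fam_nat s2) (fam_inv_nat s2) p (ltn_ord u).
have ordE (i : 'I_K) : Ordinal (ltn_ord i) = i by apply: val_inj.
move=> /(can_inj (bumpK u)); rewrite !(fam_natE _ (ltn_ord u) (ltn_ord p)) !ordE.
exact: val_inj.
Qed.

Lemma lol_nb_tail K (pi1 pi2 : nat -> nat -> nat) u p :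
  K <= u -> lol_nb K pi1 u p = lol_nb K pi2 u p.
Proof. by rewrite /lol_nb ltnNge => ->. Qed.

Lemma lol_bp_tail K (pi1 pi1' pi2 pi2' : nat -> nat -> nat) u p :
  K <= u -> (u == K) ==> (K <= p) -> lol_bp K pi1 pi1' u p = lol_bp K pi2 pi2' u p.
Proof. by rewrite /lol_bp ltnNge => -> /=; case: eqP => //= _; rewrite ltnNge => ->. Qed.

Section Locality.
Variables (n K : nat) (K_lt_n : K < n) (S M : Type) (A : Alg S M).
Variables (s1 s2 : {ffun 'I_K -> {perm 'I_K}}) (adv1 adv2 : 'I_n -> seq bool).
Local Notation G1 := (lollipop s1 K_lt_n).
Local Notation G2 := (lollipop s2 K_lt_n).
Local Notation hub := (node K_lt_n K).
Hypothesis eq_adv : adv1 =1 adv2.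
Hypothesis eq_hub_bp : forall p, p < K -> bp G1 hub p = bp G2 hub p.

(* A path node x at time t <= x - K + 1 depends on the clique only through messages
   the hub received in round 1, i.e. initial clique states (degree K, advice) and
   the back ports of the hub's clique edges. *)
Lemma run_lollipop_tail t (x : 'I_n) : K <= x -> t <= x - K + 1 ->
  run A G1 adv1 t x = run A G2 adv2 t x.
Proof.
elim: t x => [|t IH] x Kx tx /=; first by rewrite eq_adv.
rewrite IH; [|lia|lia]; congr (a_update _ _ _).
apply/eq_in_map => p; rewrite mem_iota add0n => /andP [_ hp].
have eq_nb : lol_gnb s1 K_lt_n x p = lol_gnb s2 K_lt_n x p.
  by rewrite /lol_gnb (lol_nb_tail _ (fam_nat s2)).
have eq_bp : lol_gbp s1 x p = lol_gbp s2 x p.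
  case: (boolP ((x == K :> nat) && (p < K))) => [/andP [/eqP xK pK] | hub_clique].
    have -> : x = hub by apply: val_inj; rewrite /= val_node.
    exact: eq_hub_bp.
  by rewrite /lol_gbp (lol_bp_tail _ _ (fam_nat s2) (fam_inv_nat s2)) //; lia.
rewrite eq_nb eq_bp; congr (a_send _ _ _).
have [xK | Kx'] : x = K :> nat \/ K < x by lia.
  case: (ltnP p K) => pK.
    have t0 : t = 0 by lia.
    by rewrite t0 /= eq_adv.
  have nbE : val (lol_gnb s2 K_lt_n x p) = K.+1.
    rewrite val_lol_gnb // xK.
    by have [_ -> _] := lol_hub n K (fam_nat s2) (fam_inv_nat s2) p; rewrite ltnNge pK.
  by apply: IH; rewrite nbE; lia.
have [_ nbE _] := lol_path n (fam_nat s2) (fam_inv_nat s2) p Kx'.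
by apply: IH; rewrite val_lol_gnb // nbE; case: ifP; lia.
Qed.

End Locality.

Section Counting.
Variables (n D : nat) (D_gt0 : 0 < D) (D_lt_n : D < n).
Variables (S M : Type) (A : Alg S M) (oracle : PGraph n -> 'I_n -> seq bool).
Hypothesis recognizes : forall G, diameter G D -> recognizes_within A G (oracle G) D.

Let K := n - D.
Let K_gt0 : 0 < K. Proof. rewrite /K; lia. Qed.
Let K_lt_n : K < n. Proof. rewrite /K; lia. Qed.
Local Notation family := {ffun 'I_K -> {perm 'I_K}}.
Let G (s : family) := lollipop s K_lt_n.
Let adv (s : family) := oracle (G s).
Let L := \max_(s : family) advice_size (adv s).
Let hub := node K_lt_n K.
Let far := node K_lt_n n.-1.

Lemma diameter_G (s : family) : diameter (G s) D.
Proof. by have := lollipop_diameter s K_lt_n K_gt0; rewrite /K subKn // ltnW. Qed.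

Definition far_output (s : family) :=
  ohead (pmap (fun t => a_out A (run A (G s) (adv s) t far)) (iota 0 D.+1)).

Lemma far_output_iso s : exists H, far_output s = Some H /\ pg_iso (G s) (projT2 H).
Proof.
have [t [tD [H [out [iso before]]]]] := recognizes (diameter_G s) far.
by exists H; split => //; apply: (ohead_pmap_iota (t := t)).
Qed.

Lemma size_adv_le s v : size (adv s v) <= L.
Proof.
apply: leq_trans (@leq_bigmax _ (fun v => size (adv s v)) v) _.
exact: (@leq_bigmax _ (fun s => advice_size (adv s)) s).
Qed.

Lemma bincode_adv_le s v : bincode (adv s v) <= 2 ^ L.+1.
Proof.
apply/ltnW/(leq_trans (bincode_lt (adv s v))).
by rewrite leq_exp2l // ltnS size_adv_le.
Qed.

Lemma hub_bp_lt s p : p < K -> bp (G s) hub p < K.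
Proof.
move=> pK; have hp : p < deg (G s) hub.
  rewrite /= /lol_gdeg val_node //.
  by have [-> _ _] := lol_hub n K (fam_nat s) (fam_inv_nat s) p; lia.
have := bp_lt hp; rewrite /= /lol_gdeg val_lol_gnb // val_node //.
have [_ -> _] := lol_hub n K (fam_nat s) (fam_inv_nat s) p.
by rewrite pK; have [-> _ _] := lol_clique n (fam_nat s) (fam_inv_nat s) 0 pK.
Qed.

(* All that the far end of the path can learn within D rounds. *)
Definition local_view (s : family) :
    {ffun 'I_n -> 'I_(2 ^ L.+1).+1} * {ffun 'I_K -> 'I_K.+1} :=
  ([ffun v => inord (bincode (adv s v))], [ffun p : 'I_K => inord (bp (G s) hub p)]).

Lemma local_view_far_output s1 s2 :
  local_view s1 = local_view s2 -> far_output s1 = far_output s2.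
Proof.
case=> /ffunP eq_code /ffunP eq_bp.
have eq_adv : adv s1 =1 adv s2.
  move=> v; move: (eq_code v); rewrite !ffunE => /inord_inj e.
  by apply/bincode_inj/e; apply: bincode_adv_le.
have eq_hub : forall p, p < K -> bp (G s1) hub p = bp (G s2) hub p.
  move=> p pK; move: (eq_bp (Ordinal pK)); rewrite !ffunE => /inord_inj; apply.
    exact/ltnW/hub_bp_lt.
  exact/ltnW/hub_bp_lt.
rewrite /far_output; congr ohead.
apply/eq_in_pmap => t; rewrite mem_iota add0n => /andP [_ tD].
rewrite (run_lollipop_tail A eq_adv eq_hub) // /far val_node /K; lia.
Qed.

Lemma iso_code_ex s : exists g : {ffun 'I_n -> 'I_n.+1}, forall H, far_output s = Some H ->
  exists f, pg_iso_map (G s) (projT2 H) f /\ forall v, g v = f v :> nat.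
Proof.
have [[m H] [-> [f iso]]] := far_output_iso s.
have mn : m = n by have := bij_eq_card iso.1; rewrite !card_ord.
exists [ffun v => inord (f v)] => _ [<-]; exists f; split => // v.
by rewrite ffunE inordK //= ltnS -mn ltnW.
Qed.

Definition iso_code (s : family) :=
  proj1_sig (constructive_indefinite_description _ (iso_code_ex s)).

Lemma iso_codeP s H : far_output s = Some H ->
  exists f, pg_iso_map (G s) (projT2 H) f /\ forall v, iso_code s v = f v :> nat.
Proof. by rewrite /iso_code; case: constructive_indefinite_description => g /=; apply. Qed.

(* The local view fixes the common output H, and an isomorphism onto H fixes the graph. *)
Lemma view_iso_code_inj : injective (fun s => (local_view s, iso_code s)).
Proof.
move=> s1 s2 e; have eq_out := local_view_far_output (congr1 fst e).
have /= eq_code := congr1 snd e.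
have [H [out1 _]] := far_output_iso s1.
have [f1 [iso1 code1]] := iso_codeP out1.
have [f2 [iso2 code2]] := iso_codeP (etrans (esym eq_out) out1).
have f12 : f1 =1 f2 by move=> v; apply: ord_inj; rewrite -code1 -code2 eq_code.
apply: (lollipop_inj (K_lt_n := K_lt_n)) => v p hp.
exact: pg_iso_map_nb f12 iso1 iso2 hp.
Qed.

Lemma family_count : (K`!) ^ K <= (2 ^ L.+1).+1 ^ n * K.+1 ^ K * n.+1 ^ n.
Proof.
by have := leq_card _ view_iso_code_inj; rewrite !card_prod !card_ffun !card_Sn !card_ord.
Qed.

Lemma lollipop_advice_count : exists G0 : PGraph n, diameter G0 D /\
  ((n - D)`!) ^ (n - D) <=
  (2 ^ (advice_size (oracle G0)).+1).+1 ^ n * (n - D).+1 ^ (n - D) * n.+1 ^ n.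
Proof.
have fam_gt0 : 0 < #|{: family}| by rewrite card_ffun card_Sn expn_gt0 fact_gt0.
have [s0 L_s0] := @eq_bigmax family (fun s => advice_size (adv s)) fam_gt0.
exists (G s0); split; first exact: diameter_G.
by have := family_count; rewrite /L L_s0.
Qed.

End Counting.

Lemma fact_ge_pow a b : a ^ b <= (a + b)`!.
Proof.
elim: b => [|b IH]; first by rewrite fact_gt0.
by rewrite expnS addnS factS leq_mul //; lia.
Qed.

Lemma leq_expn2r a b e : a <= b -> a ^ e <= b ^ e.
Proof. by move=> ab; case: e => [|e] //; rewrite leq_exp2r. Qed.

Lemma count_bound_half_pow n K X : 0 < K <= n ->
  (K`!) ^ K <= (2 ^ X.+1).+1 ^ n * K.+1 ^ K * n.+1 ^ n ->
  (K./2) ^ (K./2 * K) <= 2 ^ (X.+2 * n) * n.+1 ^ (2 * n).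
Proof.
move=> /andP [K_gt0 Kn] count; set j := K./2.
have fact_j : j ^ j <= K`!.
  by apply: leq_trans (fact_ge_pow j j) (leq_fact _); rewrite /j; lia.
rewrite expnM; apply: leq_trans (leq_expn2r K fact_j) (leq_trans count _).
have e2 : (2 ^ X.+1).+1 <= 2 ^ X.+2 by rewrite (expnS 2 X.+1); have := expn_gt0 2 X.+1; lia.
have eK : K.+1 ^ K <= n.+1 ^ n.
  by apply: leq_trans (leq_expn2r K (_ : K.+1 <= n.+1)) (leq_pexp2l _ Kn).
rewrite expnM mul2n -addnn expnD mulnA.
by rewrite leq_mul // leq_mul // leq_expn2r.
Qed.

Local Open Scope R_scope.

Lemma INR_muln a b : INR (a * b) = INR a * INR b.
Proof. exact: mult_INR. Qed.

Lemma INR_expn a e : INR (a ^ e) = INR a ^ e.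
Proof. by elim: e => [|e IH] //; rewrite expnS INR_muln IH. Qed.

Lemma le_INR_leq (a b : nat) : (a <= b)%N -> INR a <= INR b.
Proof. by move=> /leP; apply: le_INR. Qed.

Lemma ln_le x y : 0 < x -> x <= y -> ln x <= ln y.
Proof. by move=> x_gt0 [lt | ->]; [left; apply: ln_increasing | right]. Qed.

Lemma ln_le_nat (a b : nat) : (0 < a)%N -> (a <= b)%N -> ln (INR a) <= ln (INR b).
Proof. by move=> /ltP a_gt0 /le_INR_leq; apply: ln_le; apply: lt_0_INR. Qed.

Lemma ln_count_bound (n j K X : nat) : (0 < j)%N ->
  (j ^ (j * K) <= 2 ^ (X.+2 * n) * n.+1 ^ (2 * n))%N ->
  INR j * INR K * ln (INR j) <=
  (INR X + 2) * INR n * ln 2 + 2 * INR n * ln (INR n + 1).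
Proof.
move=> j_gt0 count; have pos : (0 < j ^ (j * K))%N by rewrite expn_gt0 j_gt0.
have jR : 0 < INR j by apply/lt_0_INR/ltP.
have nR : 0 < INR n + 1 by have := pos_INR n; lra.
have two : INR 0 + 1 + 1 = 2 by rewrite /=; lra.
have := ln_le_nat pos count.
rewrite INR_muln !INR_expn !S_INR two ln_mult ?ln_pow; try apply: pow_lt; try lra.
by rewrite !INR_muln !S_INR two; lra.
Qed.

Lemma xlnx_le (x J k N X : R) : 1 <= N -> 64 * N ^ 2 <= x -> 1 <= J ->
  x <= J * J -> x * x <= 4 * N ^ 2 * (J * k) ->
  J * k * ln J <= (X + 2) * x * ln 2 + 2 * x * ln (x + 1) ->
  x * ln x <= 32 * N ^ 2 * X * ln 2.
Proof.
move=> N1 x_ge J1 xJ xJk count.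
have x64 : 64 <= x by nra.
have ln2 : 0 < ln 2 by have := ln_lt_2; lra.
have lnJ : 0 <= ln J by rewrite -ln_1; apply: ln_le; lra.
have lnx : 6 * ln 2 <= ln x.
  have -> : 6 * ln 2 = ln (2 ^ 6) by rewrite ln_pow /=; lra.
  by apply: ln_le; rewrite /=; lra.
have ln_x1 : ln (x + 1) <= 2 * ln x.
  by have := @ln_le (x + 1) (x * x) ltac:(lra) ltac:(nra); rewrite ln_mult; lra.
have ln_xJ : ln x <= 2 * ln J.
  by have := @ln_le x (J * J) ltac:(lra) xJ; rewrite ln_mult; lra.
have count' : J * k * ln J <= (X + 2) * x * ln 2 + 4 * x * ln x by nra.
have sq : x * x * ln x <= 8 * N ^ 2 * ((X + 2) * x * ln 2 + 4 * x * ln x).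
  apply: Rle_trans (_ : 4 * N ^ 2 * (J * k) * (2 * ln J) <= _).
    by apply: Rmult_le_compat; nra.
  have -> : 4 * N ^ 2 * (J * k) * (2 * ln J) = 8 * N ^ 2 * (J * k * ln J) by ring.
  by apply: Rmult_le_compat_l; nra.
have half : 32 * N ^ 2 * ln x <= x / 2 * ln x by apply: Rmult_le_compat_r; lra.
have bound : x * ln x <= 16 * N ^ 2 * (X + 2) * ln 2 by apply: (Rmult_le_reg_l x); nra.
have X22 : 22 <= X.
  have : 64 * N ^ 2 * (6 * ln 2) <= 16 * N ^ 2 * (X + 2) * ln 2.
    by apply: (Rle_trans _ (x * ln x)) bound; apply: Rmult_le_compat; nra.
  have pos : 0 < N ^ 2 * ln 2 by apply: Rmult_lt_0_compat; [apply: pow_lt |]; lra.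
  by move=> h; apply: (Rmult_le_reg_l (N ^ 2 * ln 2)); lra.
by apply: (Rle_trans _ _ _ bound); apply: Rmult_le_compat_r; nra.
Qed.

Lemma advice_lower_bound (N n K X : nat) :
  (0 < N)%N -> (64 * N ^ 2 <= n)%N -> (n <= N * K)%N -> (K <= n)%N ->
  (K`! ^ K <= (2 ^ X.+1).+1 ^ n * K.+1 ^ K * n.+1 ^ n)%N ->
  / (32 * INR N ^ 2) * INR n * log2 (INR n) <= INR X.
Proof.
move=> N_gt0 n_ge nK Kn count; set j := K./2.
have [K_gt0 Kj] : (0 < K)%N /\ (K <= 4 * j)%N by rewrite /j; nia.
have j_gt0 : (0 < j)%N by lia.
have nNj : (n <= N * (4 * j))%N by apply: leq_trans nK _; rewrite leq_mul2l Kj orbT.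
have n2_jK : (n * n <= 4 * N ^ 2 * (j * K))%N by have := leq_mul nK nNj; nia.
have n_j2 : (n <= j * j)%N.
  have : (N ^ 2 * (4 * n) <= N ^ 2 * (j * j))%N.
    by have := leq_mul nNj nNj; have := leq_mul n_ge (leqnn n); nia.
  by rewrite leq_pmul2l ?expn_gt0 ?N_gt0 //; lia.
have Krange : (0 < K <= n)%N by rewrite K_gt0 Kn.
have NR : 1 <= INR N by apply: (le_INR_leq N_gt0).
have xN : 64 * INR N ^ 2 <= INR n.
  by have := le_INR_leq n_ge; rewrite INR_muln INR_expn (INR_IZR_INZ 64).
have JR : 1 <= INR j by apply: (le_INR_leq j_gt0).
have xJ : INR n <= INR j * INR j by have := le_INR_leq n_j2; rewrite INR_muln.
have xJk : INR n * INR n <= 4 * INR N ^ 2 * (INR j * INR K).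
  by have := le_INR_leq n2_jK; rewrite !INR_muln (INR_IZR_INZ 4) /=; nra.
have := xlnx_le NR xN JR xJ xJk (ln_count_bound j_gt0 (count_bound_half_pow Krange count)).
have ln2 : 0 < ln 2 by have := ln_lt_2; lra.
have N2 : 0 < INR N ^ 2 by apply: pow_lt; lra.
rewrite /log2 => h; apply: (Rmult_le_reg_l (32 * INR N ^ 2 * ln 2)); first nra.
have -> : 32 * INR N ^ 2 * ln 2 * (/ (32 * INR N ^ 2) * INR n * (ln (INR n) / ln 2)) =
  INR n * ln (INR n) by field; lra.
by lra.
Qed.

Lemma alpha_slack alpha : 0 < alpha < 1 ->
  exists N : nat, (0 < N)%N /\
    forall n D : nat, INR D <= alpha * INR n -> (n <= N * (n - D))%N.
Proof.
move=> [alpha_gt0 alpha_lt1]; have [N N_gt] := INR_unbounded (/ (1 - alpha)).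
have N_slack : 1 < INR N * (1 - alpha).
  have : / (1 - alpha) * (1 - alpha) = 1 by field; lra.
  by nra.
have N_gt0 : (0 < N)%N by case: N N_gt N_slack => [|N'] //=; lra.
exists N; split => // n D D_le.
have ND : INR N * INR D <= INR N * (alpha * INR n).
  by apply: Rmult_le_compat_l => //; apply: pos_INR.
have Nn : INR n <= INR N * (1 - alpha) * INR n by have := pos_INR n; nra.
have : INR N * INR D + INR n <= INR N * INR n by lra.
rewrite -!INR_muln -plus_INR => /INR_le /leP; rewrite mulnBr; lia.
Qed.

Local Close Scope R_scope.

Theorem theorem5p4 :
  forall alpha : R, (0 < alpha < 1)%R ->
  exists c : R, (0 < c)%R /\
  exists n0 : nat,
  forall n D : nat, n0 <= n -> 1 <= D -> (INR D <= alpha * INR n)%R ->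
  forall (S M : Type) (A : Alg S M) (oracle : PGraph n -> 'I_n -> seq bool),
    (forall G : PGraph n, diameter G D -> recognizes_within A G (oracle G) D) ->
    exists G : PGraph n, diameter G D /\
      (c * INR n * log2 (INR n) <= INR (advice_size (oracle G)))%R.
Proof.
move=> alpha alpha01; have [N [N_gt0 slack]] := alpha_slack alpha01.
have NR : (0 < INR N ^ 2)%R by apply/pow_lt/lt_0_INR/ltP.
exists (/ (32 * INR N ^ 2))%R; split; first by apply: Rinv_0_lt_compat; lra.
exists (64 * N ^ 2)%N => n D n_ge D_gt0 D_le S M A oracle recog.
have nK := slack n D D_le.
have D_lt_n : (D < n)%N by nia.
have [G [diamG count]] := lollipop_advice_count D_gt0 D_lt_n recog.
by exists G; split => //; apply: advice_lower_bound N_gt0 n_ge nK (leq_subr D n) count.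
Qed.
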